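(* Let $K$ be a causal poset with a symmetry group $S$. Then $K$ has a covariant path-frame system if and only if for every pair $o,a\in K$ there is a path joining $a$ to $o$ all of whose generating 1-simplices are invariant under $S_a\cap S_o$.
   Context: A causal poset is a pathwise connected poset $(K,\le)$ with an irreflexive symmetric relation $\perp$ satisfying $o\perp a,\ \tilde o\le o\Rightarrow\tilde o\perp a$; a symmetry group $S$ is a group of bijections of $K$ preserving $\le$ and $\perp$ in both directions; $S_a=\{s\in S:s(a)=a\}$ is the stabilizer of $a$. A 1-simplex is $b=(|b|;\partial_0b,\partial_1b)$ with $\partial_0b,\partial_1b\le|b|$, opposite $\overline b=(|b|;\partial_1b,\partial_0b)$, and $s\in S$ acts by $s(b)=(s(|b|);s(\partial_0b),s(\partial_1b))$; $b$ is invariant under a subgroup $H$ if $s(b)=b$ for all $s\in H$. $\mathrm T_1(K)$: 1-simplices with $\partial_0b\ne|b|\ne\partial_1b$. $\mathrm F(K)$: group generated by $\mathrm T_1(K)$ with $b^{-1}=\overline b$; $S$ acts on words letterwise. A path from $a$ to $o$ is a word $b_n\cdots b_1$ ($b_i\in\mathrm T_1(K)$, possibly empty when $a=o$) with $\partial_1b_1=a$, $\partial_0b_n=o$, $\partial_0b_i=\partial_1b_{i+1}$. A path-frame $P_o$ over a pole $o\in K$ is a choice, for every $a\in K$, of a path $p_{(o,a)}$ from $o$ to $a$, with $p_{(o,o)}=1$ (the empty word). A covariant path-frame system is a family $\{P_o:o\in K\}$ of path-frames such that $s(p_{(a,x)})=p_{(s(a),s(x))}$ for all $a,x\in K$, $s\in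 S$. *)

From Stdlib Require Import List.
Import ListNotations.
Set Implicit Arguments.

Section CausalPoset.
Variable K : Type.

Record simplex1 := Simplex1 { supp : K ; d0 : K ; d1 : K }.

Definition opp (b : simplex1) : simplex1 := Simplex1 (supp b) (d1 b) (d0 b).

Definition act (s : K -> K) (b : simplex1) : simplex1 :=
  Simplex1 (s (supp b)) (s (d0 b)) (s (d1 b)).

Definition act_word (s : K -> K) (w : list simplex1) : list simplex1 :=
  map (act s) w.

Definition in_T1 (le : K -> K -> Prop) (b : simplex1) : Prop :=
  le (d0 b) (supp b) /\ le (d1 b) (supp b) /\ d0 b <> supp b /\ d1 b <> supp b.

(* A word b_n ... b_1 is represented by the list [b_1; ...; b_n].
   is_path le a p o : p is a path from a to o, i.e. d1 b_1 = a,
   d0 b_n = o, d0 b_i = d1 b_(i+1), all b_i in T_1(K);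
   the empty word is a path from a to o iff a = o. *)
Fixpoint is_path (le : K -> K -> Prop) (a : K) (p : list simplex1) (o : K) : Prop :=
  match p with
  | [] => a = o
  | b :: p' => in_T1 le b /\ d1 b = a /\ is_path le (d0 b) p' o
  end.

Record causal_poset (le perp : K -> K -> Prop) : Prop := {
  cp_refl : forall x, le x x ;
  cp_antisym : forall x y, le x y -> le y x -> x = y ;
  cp_trans : forall x y z, le x y -> le y z -> le x z ;
  cp_connected : forall a o, exists p, is_path le a p o ;
  cp_perp_irrefl : forall x, ~ perp x x ;
  cp_perp_sym : forall x y, perp x y -> perp y x ;
  cp_perp_down : forall o a o', perp o a -> le o' o -> perp o' a
}.

Record symmetry_group (le perp : K -> K -> Prop) (S : (K -> K) -> Prop) : Prop := {
  sg_id : S (fun x => x) ;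
  sg_comp : forall s t, S s -> S t -> S (fun x => s (t x)) ;
  sg_inv : forall s, S s -> exists t, S t /\
             (forall x, t (s x) = x) /\ (forall x, s (t x) = x) ;
  sg_le : forall s, S s -> forall x y, le x y <-> le (s x) (s y) ;
  sg_perp : forall s, S s -> forall x y, perp x y <-> perp (s x) (s y)
}.

Definition stab (S : (K -> K) -> Prop) (a : K) : (K -> K) -> Prop :=
  fun s => S s /\ s a = a.

Definition invariant (H : (K -> K) -> Prop) (b : simplex1) : Prop :=
  forall s, H s -> act s b = b.

Definition path_frame_system (le : K -> K -> Prop) (P : K -> K -> list simplex1) : Prop :=
  (forall o a, is_path le o (P o a) a) /\ (forall o, P o o = []).

Definition covariant (S : (K -> K) -> Prop) (P : K -> K -> list simplex1) : Prop :=
  forall s, S s -> forall a x, act_word s (P a x) = P (s a) (s x).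

Definition has_covariant_path_frame_system (le : K -> K -> Prop)
    (S : (K -> K) -> Prop) : Prop :=
  exists P, path_frame_system le P /\ covariant S P.

End CausalPoset.

(* A covariant frame gives, for each pair (a, o), the path p_(a,o), which is fixed letterwise by
   every symmetry fixing a and o. Conversely, pick one pair in each S-orbit of K x K together
   with a path invariant under its joint stabilizer, and transport that path to every other pair
   of the orbit by some symmetry. Two symmetries carrying the representative to the same pair
   differ by an element of its joint stabilizer, so the transported path does not depend on the
   choice; this independence is exactly covariance. *)
From Stdlib Require Import List.
From Stdlib Require Import ClassicalEpsilon FunctionalExtensionality PropExtensionality ProofIrrelevance.
Import ListNotations.

Section Words.
Context {K : Type}.

Lemma act_word_comp (f g : K -> K) (w : list (simplex1 K)) :
  act_word f (act_word g w) = act_word (fun z => f (g z)) w.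
Proof. unfold act_word; now rewrite map_map. Qed.

Lemma act_word_fixed_Forall {f : K -> K} {w : list (simplex1 K)} :
  act_word f w = w -> Forall (fun b => act f b = b) w.
Proof.
  induction w as [|b w IH]; simpl; intros E; constructor.
  - now injection E.
  - apply IH; now injection E.
Qed.

Lemma act_word_invariant {H : (K -> K) -> Prop} {w : list (simplex1 K)} {t : K -> K} :
  Forall (invariant H) w -> H t -> act_word t w = w.
Proof.
  intros F Ht; induction F as [|b w Hb _ IH]; simpl; [reflexivity|].
  now rewrite (Hb t Ht), IH.
Qed.

Lemma act_word_eq_of_fixed (f g h : K -> K) (w : list (simplex1 K)) :
  (forall z, g (h z) = z) -> act_word (fun z => h (f z)) w = w ->
  act_word f w = act_word g w.
Proof.
  intros gh E. rewrite <- E at 2. rewrite act_word_comp.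
  unfold act_word; apply map_ext; intros [? ? ?]; unfold act; simpl; now rewrite !gh.
Qed.

End Words.

Section Symmetries.
Context {K : Type}.
Variables le perp : K -> K -> Prop.
Variable S : (K -> K) -> Prop.
Hypothesis HS : symmetry_group le perp S.

Lemma symmetry_injective s : S s -> forall x y, s x = s y -> x = y.
Proof.
  intros Hs x y E. destruct (sg_inv HS s Hs) as [t [_ [ts _]]].
  now rewrite <- (ts x), <- (ts y), E.
Qed.

Lemma is_path_act s : S s ->
  forall w a o, is_path le a w o -> is_path le (s a) (act_word s w) (s o).
Proof.
  intros Hs w; induction w as [|b w IH]; simpl; intros a o Hp.
  - now subst.
  - destruct Hp as [[le0 [le1 [ne0 ne1]]] [E Hp]]. subst a.
    split; [|split; [reflexivity|now apply IH]].
    repeat split; simpl.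
    + now apply (proj1 (sg_le HS s Hs _ _)).
    + now apply (proj1 (sg_le HS s Hs _ _)).
    + intro E; apply ne0; eapply symmetry_injective; eauto.
    + intro E; apply ne1; eapply symmetry_injective; eauto.
Qed.

Lemma covariant_frame_invariant (P : K -> K -> list (simplex1 K)) :
  covariant S P ->
  forall a o, Forall (invariant (fun s => stab S a s /\ stab S o s)) (P a o).
Proof.
  intros HC a o. apply Forall_forall. intros b Hb s [[Hs Ea] [_ Eo]].
  pose proof (HC s Hs a o) as E. rewrite Ea, Eo in E.
  exact (proj1 (Forall_forall _ _) (act_word_fixed_Forall E) b Hb).
Qed.

Definition pair_orbit (a x : K) (p : K * K) : Prop :=
  exists s, S s /\ s (fst p) = a /\ s (snd p) = x.

Definition orbit_rep (a x : K) : K * K := epsilon (inhabits (a, x)) (pair_orbit a x).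

Definition rep_mover (a x : K) : K -> K :=
  epsilon (inhabits (fun z => z))
    (fun g => S g /\ g (fst (orbit_rep a x)) = a /\ g (snd (orbit_rep a x)) = x).

Lemma rep_mover_spec a x :
  S (rep_mover a x) /\ rep_mover a x (fst (orbit_rep a x)) = a /\
  rep_mover a x (snd (orbit_rep a x)) = x.
Proof.
  unfold rep_mover; apply epsilon_spec. unfold orbit_rep; apply epsilon_spec.
  exists (a, x), (fun z => z). repeat split. apply (sg_id HS).
Qed.

Lemma pair_orbit_act t a x : S t -> pair_orbit (t a) (t x) = pair_orbit a x.
Proof.
  intros Ht. apply functional_extensionality; intros p.
  apply propositional_extensionality; split.
  - intros [s [Hs [E1 E2]]]. destruct (sg_inv HS t Ht) as [u [Hu [ut _]]].
    exists (fun z => u (s z)). split; [now apply (sg_comp HS)|].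
    rewrite E1, E2; auto.
  - intros [s [Hs [E1 E2]]].
    exists (fun z => t (s z)). split; [now apply (sg_comp HS)|].
    rewrite E1, E2; auto.
Qed.

Lemma orbit_rep_act t a x : S t -> orbit_rep (t a) (t x) = orbit_rep a x.
Proof.
  intros Ht. unfold orbit_rep. rewrite (pair_orbit_act t a x Ht).
  f_equal. apply proof_irrelevance.
Qed.

Hypothesis invariant_paths : forall o a, exists w,
  is_path le a w o /\ Forall (invariant (fun s => stab S a s /\ stab S o s)) w.

(* Diagonal pairs get the empty path, so that the frame satisfies [p_(o,o) = 1]. *)
Definition invariant_path (b y : K) : list (simplex1 K) :=
  if excluded_middle_informative (b = y) then []
  else epsilon (inhabits [])
    (fun w => is_path le b w y /\
      Forall (invariant (fun s => stab S b s /\ stab S y s)) w).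

Lemma invariant_path_spec b y :
  is_path le b (invariant_path b y) y /\
  Forall (invariant (fun s => stab S b s /\ stab S y s)) (invariant_path b y).
Proof.
  unfold invariant_path. destruct (excluded_middle_informative (b = y)).
  - subst; simpl; auto.
  - apply epsilon_spec, invariant_paths.
Qed.

Definition orbit_frame (a x : K) : list (simplex1 K) :=
  act_word (rep_mover a x) (invariant_path (fst (orbit_rep a x)) (snd (orbit_rep a x))).

Lemma orbit_frame_path a x : is_path le a (orbit_frame a x) x.
Proof.
  destruct (rep_mover_spec a x) as [Hg [Ea Ex]].
  pose proof (is_path_act _ Hg _ _ _ (proj1 (invariant_path_spec
    (fst (orbit_rep a x)) (snd (orbit_rep a x))))) as Hp.
  now rewrite Ea, Ex in Hp.
Qed.

Lemma orbit_frame_diag o : orbit_frame o o = [].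
Proof.
  destruct (rep_mover_spec o o) as [Hg [Eb Ey]].
  unfold orbit_frame, invariant_path.
  destruct (excluded_middle_informative _) as [_|ne]; [reflexivity|].
  exfalso; apply ne. eapply symmetry_injective; eauto. congruence.
Qed.

Lemma orbit_frame_covariant : covariant S orbit_frame.
Proof.
  intros s Hs a x. unfold orbit_frame. rewrite act_word_comp, (orbit_rep_act s a x Hs).
  destruct (rep_mover_spec a x) as [Hg [Ga Gx]].
  destruct (rep_mover_spec (s a) (s x)) as [Hg' [Ga' Gx']].
  rewrite (orbit_rep_act s a x Hs) in Ga', Gx'.
  destruct (sg_inv HS _ Hg') as [h [Hh [hg' g'h]]].
  apply (act_word_eq_of_fixed _ _ h _ g'h).
  apply (act_word_invariant (proj2 (invariant_path_spec _ _))).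
  (* [h o s o rep_mover a x] lies in the joint stabilizer of the representative pair. *)
  assert (Hhsg : S (fun z => h (s (rep_mover a x z)))).
  { apply (sg_comp HS); auto. apply (sg_comp HS); auto. }
  split; split; auto.
  - now rewrite Ga, <- Ga', hg'.
  - now rewrite Gx, <- Gx', hg'.
Qed.

End Symmetries.

Theorem proposition4p5 (K : Type) (le perp : K -> K -> Prop)
    (HK : causal_poset le perp) (S : (K -> K) -> Prop)
    (HS : symmetry_group le perp S) :
  has_covariant_path_frame_system le S <->
  (forall o a : K, exists p : list (simplex1 K),
      is_path le a p o /\
      Forall (invariant (fun s => stab S a s /\ stab S o s)) p).
Proof.
  split.
  - intros [P [[HP _] HC]] o a. exists (P a o).
    split; [apply HP | now apply covariant_frame_invariant].
  - intros Hinv. exists (orbit_frame le S).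
    split; [split|].
    + intros; now apply orbit_frame_path with perp.
    + intros; now apply orbit_frame_diag with perp.
    + now apply orbit_frame_covariant with perp.
Qed.
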